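(* Let $\Theta$ be a branch of a tableau of $\mathbf{TAB}_{\mathbf{IB}}$. If a nominal $i$ occurs in the root formula of $\Theta$, then $i\in\mathrm{dom}(v_\Theta)$, i.e. the identity urfather $v_\Theta(i)$ exists.
   Context: Hybrid language: fix disjoint countably infinite sets $\mathbf{Prop}$ (propositional variables) and $\mathbf{Nom}$ (nominals). Formulas: $\varphi ::= p \mid i \mid \neg\varphi \mid \varphi\land\varphi \mid \Diamond\varphi \mid @_i\varphi$ with $p\in\mathbf{Prop}$, $i\in\mathbf{Nom}$; $\Box\varphi$ abbreviates $\neg\Diamond\neg\varphi$. Tableau calculus $\mathbf{TAB}_{\mathbf{IB}}$. A tableau is a well-founded tree whose nodes are formulas of the form $@_i\varphi$; its root is a formula $@_i\varphi$ (the root formula) where $i$ does not occur in $\varphi$. A branch is a maximal path; $\varphi\in\Theta$ means $\varphi$ occurs on branch $\Theta$. Each branch is extended by applying the rules below to its formulas as often as possible, except that no further formula is added to a branch once either (i) every new formula generated by applying any rule already occurs on the branch, or (ii) the branch is closed, i.e. contains $@_i\varphi$ and $@_i\neg\varphi$ for some formula $\varphi$ and nominal $i$. An accessibility formula is a formula $@_i\Diamond j$ added by rule $[\Diamond]$ (with $j$ the new nominal). Rules (premises already on the branch; conclusions added to it): [$\neg\neg$] from $@_i\neg\neg\varphi$ add $@_i\varphi$; [$\land$] from $@_i(\varphi\land\psi)$ add $@_i\varphi$ and $@_i\psi$; [$\neg\land$] from $@_i\neg(\varphi\land\psi)$ split the branch into one extended by $@_i\neg\varphi$ and one extended by $@_i\neg\psi$;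 [$\Diamond$] from $@_i\Diamond\varphi$, which is not an accessibility formula, add $@_i\Diamond j$ and $@_j\varphi$ where $j$ is a nominal not occurring on the branch; this rule is applied at most once per formula, and only if $i$ is a quasi-urfather on the branch (defined below); [$\neg\Diamond$] from $@_i\neg\Diamond\varphi$ and $@_i\Diamond j$ add $@_j\neg\varphi$; [$\Box_{sym}$] from $@_i\Box\varphi$ and $@_j\Diamond i$ add $@_j\varphi$; [$@$] from $@_i@_j\varphi$ add $@_j\varphi$; [$\neg@$] from $@_i\neg@_j\varphi$ add $@_j\neg\varphi$; [$Id$] from $@_i\varphi$, which is not an accessibility formula, and $@_i j$ add $@_j\varphi$; [$Ref$] for any nominal $i$ occurring on the branch add $@_i i$; ($\mathcal{I}$) for any nominal $i$ occurring on the branch add $@_i\neg\Diamond i$. Auxiliary notions for a branch $\Theta$. $@_i\varphi$ is a quasi-subformula of $@_j\psi$ if $\varphi$ is a subformula of $\psi$, or $\varphi=\neg\chi$ with $\chi$ a subformula of $\psi$. For a nominal $i$ occurring in $\Theta$, $T^\Theta(i)=\{\varphi \mid @_i\varphi\in\Theta$ and $@_i\varphi$ is a quasi-subformula of the root formula$\}$. Nominals $i,j$ are twins if $T^\Theta(i)=T^\Theta(j)$. $i\prec_\Theta j$ if $j$ was introduced by applying $[\Diamond]$ to a formula $@_i\Diamond\varphi$; $\prec_\Theta^*$ is its reflexive transitive closure. A nominal $i$ is a quasi-urfather on $\Theta$ if there are no twins $j\neq k$ with $j\prec_\Theta^* i$ and $k\prec_\Theta^* i$. The identity urfather $v_\Theta(i)$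 of a nominal $i$ occurring in $\Theta$ is the earliest introduced nominal $j$ on $\Theta$ such that $j$ is a twin of $i$ and $j$ is a quasi-urfather; it may fail to exist, and $\mathrm{dom}(v_\Theta)$ denotes the set of nominals $i$ for which it exists. *)

From Stdlib Require Import List Arith Relations.
Import ListNotations.

Inductive form : Type :=
| PVar (p : nat)
| Nom (i : nat)
| Neg (f : form)
| And (f g : form)
| Dia (f : form)
| At (i : nat) (f : form).

Definition Box (f : form) : form := Neg (Dia (Neg f)).

Fixpoint noms (f : form) : list nat :=
  match f with
  | PVar _ => []
  | Nom i => [i]
  | Neg g => noms g
  | And g h => noms g ++ noms h
  | Dia g => noms g
  | At i g => i :: noms g
  end.

Fixpoint subformula (f g : form) : Prop :=
  f = g \/
  match g with
  | PVar _ | Nom _ => False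
  | Neg h | Dia h | At _ h => subformula f h
  | And h k => subformula f h \/ subformula f k
  end.

(* A tableau node is a formula @_i phi, represented as the pair (i, phi). *)
Definition node : Type := (nat * form)%type.

Definition nom_in_node (k : nat) (n : node) : Prop :=
  fst n = k \/ In k (noms (snd n)).

(* @_i phi is a quasi-subformula of @_j psi *)
Definition quasi_sub (phi psi : form) : Prop :=
  subformula phi psi \/ exists chi, phi = Neg chi /\ subformula chi psi.

(* A step of branch construction: either an application of rule [Dia] to the
   premise @_i Dia phi introducing the new nominal j (adding @_i Dia j and
   @_j phi), or an application of another rule adding the listed formulas. *)
Inductive step : Type :=
| SDia (i : nat) (phi : form) (j : nat)
| SOther (added : list node).

Definition step_concl (s : step) : list node :=
  match s with
  | SDia i phi j => [(i, Dia (Nom j)); (j, phi)]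
  | SOther l => l
  end.

(* formulas on the branch with root r and steps ss (in order of addition) *)
Definition forms (r : node) (ss : list step) : list node :=
  r :: flat_map step_concl ss.

Definition on_branch (r : node) (ss : list step) (n : node) : Prop :=
  In n (forms r ss).

Definition nom_occurs (r : node) (ss : list step) (k : nat) : Prop :=
  exists n, on_branch r ss n /\ nom_in_node k n.

Definition is_acc (ss : list step) (n : node) : Prop :=
  exists i phi j, In (SDia i phi j) ss /\ n = (i, Dia (Nom j)).

Definition prec (ss : list step) (i j : nat) : Prop :=
  exists phi, In (SDia i phi j) ss.

Definition prec_star (ss : list step) : nat -> nat -> Prop :=
  clos_refl_trans nat (prec ss).

Definition Tset (r : node) (ss : list step) (i : nat) (phi : form) : Prop :=
  on_branch r ss (i, phi) /\ quasi_sub phi (snd r).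

Definition twins (r : node) (ss : list step) (i j : nat) : Prop :=
  nom_occurs r ss i /\ nom_occurs r ss j /\
  (forall phi, Tset r ss i phi <-> Tset r ss j phi).

Definition quasi_urfather (r : node) (ss : list step) (i : nat) : Prop :=
  ~ (exists j k, j <> k /\ twins r ss j k /\
                 prec_star ss j i /\ prec_star ss k i).

(* Rule instances other than [Dia]; each instance yields the list of its
   alternative extensions (two alternatives for the branching rule [~/\]). *)
Inductive rule_inst (r : node) (ss : list step) : list (list node) -> Prop :=
| R_negneg i phi :
    on_branch r ss (i, Neg (Neg phi)) -> rule_inst r ss [[(i, phi)]]
| R_and i a b :
    on_branch r ss (i, And a b) -> rule_inst r ss [[(i, a); (i, b)]]
| R_negand i a b :
    on_branch r ss (i, Neg (And a b)) ->
    rule_inst r ss [[(i, Neg a)]; [(i, Neg b)]]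
| R_negdia i j phi :
    on_branch r ss (i, Neg (Dia phi)) -> on_branch r ss (i, Dia (Nom j)) ->
    rule_inst r ss [[(j, Neg phi)]]
| R_boxsym i j phi :
    on_branch r ss (i, Box phi) -> on_branch r ss (j, Dia (Nom i)) ->
    rule_inst r ss [[(j, phi)]]
| R_at i j phi :
    on_branch r ss (i, At j phi) -> rule_inst r ss [[(j, phi)]]
| R_negat i j phi :
    on_branch r ss (i, Neg (At j phi)) -> rule_inst r ss [[(j, Neg phi)]]
| R_id i j phi :
    on_branch r ss (i, phi) -> ~ is_acc ss (i, phi) ->
    on_branch r ss (i, Nom j) -> rule_inst r ss [[(j, phi)]]
| R_ref i :
    nom_occurs r ss i -> rule_inst r ss [[(i, Nom i)]]
| R_irr i :
    nom_occurs r ss i -> rule_inst r ss [[(i, Neg (Dia (Nom i)))]].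

Definition dia_applicable (r : node) (ss : list step) (i : nat) (phi : form) : Prop :=
  on_branch r ss (i, Dia phi) /\ ~ is_acc ss (i, Dia phi) /\
  (forall j, ~ In (SDia i phi j) ss) /\ quasi_urfather r ss i.

Definition valid_step (r : node) (ss : list step) (s : step) : Prop :=
  match s with
  | SDia i phi j => dia_applicable r ss i phi /\ ~ nom_occurs r ss j
  | SOther l => exists alts, rule_inst r ss alts /\ In l alts
  end.

Definition closed (r : node) (ss : list step) : Prop :=
  exists i phi, on_branch r ss (i, phi) /\ on_branch r ss (i, Neg phi).

Definition saturated (r : node) (ss : list step) : Prop :=
  (forall alts, rule_inst r ss alts ->
     exists l, In l alts /\ forall n, In n l -> on_branch r ss n) /\
  (forall i phi, ~ dia_applicable r ss i phi).

Definition root_ok (r : node) : Prop := ~ In (fst r) (noms (snd r)).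

Inductive branch_prefix (r : node) : list step -> Prop :=
| bp_nil : branch_prefix r []
| bp_snoc ss s :
    branch_prefix r ss -> ~ closed r ss -> ~ saturated r ss ->
    valid_step r ss s -> branch_prefix r (ss ++ [s]).

Definition tab_branch (r : node) (ss : list step) : Prop :=
  root_ok r /\ branch_prefix r ss /\ (closed r ss \/ saturated r ss).

Definition intro_pos (r : node) (ss : list step) (k n : nat) : Prop :=
  (exists f, nth_error (forms r ss) n = Some f /\ nom_in_node k f) /\
  (forall m f, m < n -> nth_error (forms r ss) m = Some f -> ~ nom_in_node k f).

Definition introduced_before (r : node) (ss : list step) (k j : nat) : Prop :=
  exists nk nj, intro_pos r ss k nk /\ intro_pos r ss j nj /\ nk < nj.

Definition identity_urfather (r : node) (ss : list step) (i j : nat) : Prop :=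
  twins r ss i j /\ quasi_urfather r ss j /\
  (forall k, twins r ss i k -> quasi_urfather r ss k -> ~ introduced_before r ss k j).

Definition in_dom_v (r : node) (ss : list step) (i : nat) : Prop :=
  exists j, identity_urfather r ss i j.

(* Root nominals are never introduced by [Dia], which always picks a nominal absent from the branch.
   Hence a root nominal has no proper ancestor for the relation prec, so it is a quasi-urfather, and
   being introduced at position 0 no twin is introduced before it: every root nominal is its own
   identity urfather. *)
From Stdlib Require Import List Arith Relations Lia.
Import ListNotations.

Lemma dia_nominal_not_in_root r ss i phi j :
  branch_prefix r ss -> In (SDia i phi j) ss -> ~ nom_in_node j r.
Proof.
  intros Hb; revert i phi j.
  induction Hb as [|ss s Hb IH _ _ Hvalid]; intros i phi j Hin; [contradiction|].
  apply in_app_or in Hin as [Hin|[Hs|[]]]; [eapply IH; eauto|subst s].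
  destruct Hvalid as [_ Hfresh]; intro Hj.
  apply Hfresh; exists r; split; [left; reflexivity|exact Hj].
Qed.

Lemma prec_star_root r ss i j :
  branch_prefix r ss -> nom_in_node i r -> prec_star ss j i -> j = i.
Proof.
  intros Hb Hi Hji; apply clos_rt_rtn1 in Hji.
  destruct Hji as [|k i [phi Hdia] _]; [reflexivity|].
  exfalso; exact (dia_nominal_not_in_root r ss k phi i Hb Hdia Hi).
Qed.

Lemma root_quasi_urfather r ss i :
  branch_prefix r ss -> nom_in_node i r -> quasi_urfather r ss i.
Proof.
  intros Hb Hi [j [k [Hjk [_ [Hj Hk]]]]].
  apply Hjk.
  rewrite (prec_star_root r ss i j Hb Hi Hj), (prec_star_root r ss i k Hb Hi Hk).
  reflexivity.
Qed.

Lemma twins_refl r ss i : nom_occurs r ss i -> twins r ss i i.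
Proof. intros Hi; split; [exact Hi|split; [exact Hi|tauto]]. Qed.

Lemma intro_pos_unique r ss k n m :
  intro_pos r ss k n -> intro_pos r ss k m -> n = m.
Proof.
  intros [[f [Hf Hkf]] Hbefore_n] [[g [Hg Hkg]] Hbefore_m].
  destruct (lt_eq_lt_dec n m) as [[Hnm|Hnm]|Hmn]; [|exact Hnm|].
  - exfalso; exact (Hbefore_m n f Hnm Hf Hkf).
  - exfalso; exact (Hbefore_n m g Hmn Hg Hkg).
Qed.

Lemma intro_pos_root r ss k : nom_in_node k r -> intro_pos r ss k 0.
Proof.
  intros Hk; split.
  - exists r; split; [reflexivity|exact Hk].
  - intros m f Hm; lia.
Qed.

Lemma not_introduced_before_root r ss k j :
  nom_in_node j r -> ~ introduced_before r ss k j.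
Proof.
  intros Hj [nk [nj [_ [Hpos Hlt]]]].
  rewrite <- (intro_pos_unique r ss j 0 nj (intro_pos_root r ss j Hj) Hpos) in Hlt.
  lia.
Qed.

Theorem lemma5 (r : node) (ss : list step) (i : nat) :
  tab_branch r ss -> nom_in_node i r -> in_dom_v r ss i.
Proof.
  intros [_ [Hb _]] Hi.
  exists i; split; [|split].
  - apply twins_refl; exists r; split; [left; reflexivity|exact Hi].
  - exact (root_quasi_urfather r ss i Hb Hi).
  - intros k _ _; exact (not_introduced_before_root r ss k i Hi).
Qed.
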